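(* For every PMCFG $G$, $L(G)\subseteq L(\mathcal{M}(G))$, where $\mathcal{M}(G)$ is the automaton with respect to $G$.
   Context: Composition functions. Fix variables $x_i^j$ ($i,j\in\mathbb{N}_+$). For $s_1,\dots,s_\ell,s\in\mathbb{N}_+$ a composition function of sort $(s_1\cdots s_\ell,s)$ over $\Sigma$ is given by a tuple $[u_1,\dots,u_s]$ with each $u_i$ a string over $\Sigma\cup\{x_i^j : i\in[\ell], j\in[s_i]\}$; it maps $((w_1^1,\dots,w_1^{s_1}),\dots,(w_\ell^1,\dots,w_\ell^{s_\ell}))$ to the $s$-tuple obtained from $(u_1,\dots,u_s)$ by replacing each $x_i^j$ by $w_i^j$ (variables may occur several times or not at all). PMCFG. $G=(N,\Sigma,I,R)$ with $N$ a finite set of nonterminals each with a sort in $\mathbb{N}_+$, $I$ a set of nonterminals of sort 1, $R$ a finite set of rules $A\to f(A_1,\dots,A_\ell)$ with $f$ of sort $(s_1\cdots s_\ell,s)$, $A$ of sort $s$, $A_i$ of sort $s_i$. Derivations from $A$: $r(d_1,\dots,d_\ell)$ with $r=A\to f(A_1,\dots,A_\ell)\in R$ and $d_i$ derivations from $A_i$; the generated tuple is $f$ applied to the tuples generated by the $d_i$. $L(G)$ = strings generated by derivations from some $S\in I$. Tree stacks and TSA. A tree stack over $\Gamma$ ($@\notin\Gamma$) is $(\xi,\rho)$ with $\xi:\mathbb{N}_+^*\rightharpoonup\Gamma\cup\{@\}$ of finite prefix-closed domain, $\xi(\varepsilon)=@$, labels elsewhere in $\Gamma$, and $\rho\in\mathrm{dom}(\xi)$.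 Predicates: $\mathrm{bottom}$ ($\rho=\varepsilon$), $\mathrm{equals}(\gamma)$ ($\xi(\rho)=\gamma$), and ''all''. Instructions: $\mathrm{id}$; $\mathrm{push}_n(\gamma)$ (defined iff $\rho n\notin\mathrm{dom}(\xi)$, result $(\xi[\rho n\mapsto\gamma],\rho n)$); $\mathrm{up}_n$ (defined iff $\rho n\in\mathrm{dom}(\xi)$, result $(\xi,\rho n)$); $\mathrm{down}$ ($(\xi,\rho n)\mapsto(\xi,\rho)$); $\mathrm{set}(\gamma)$ (defined iff $\rho\ne\varepsilon$, result $(\xi[\rho\mapsto\gamma],\rho)$). Initial tree stack $(\{\varepsilon\mapsto@\},\varepsilon)$. A TSA has finite states, initial state, final states and finitely many transitions $(q,\omega,p,f,q')$ ($\omega\in\Sigma\cup\{\varepsilon\}$); $(q,c,w)\vdash_\tau(q',c',w')$ iff $w=\omega w'$, $c\in p$, $f(c)=c'$ defined. A valid run goes from (initial state, initial tree stack, $w$) to (final state, some tree stack, $\varepsilon$); $L(\mathcal{M})$ is the set of such $w$. The automaton $\mathcal{M}(G)$ with respect to a PMCFG $G=(N,\Sigma,I,R)$. Let $\bar R=\{\langle r,i,j\rangle : r=A\to[u_1,\dots,u_s](A_1,\dots,A_\ell)\in R, i\in[s], j\in\{0,\dots,|u_i|\}\}$ and $\Box$ a fresh symbol. Stack alphabet $\Gamma=\{\Box\}\cup R\cup\bar R$; states $Q=\{q,q_+,q_- : q\in\bar R\cup\{\Box\}\}$ (with $q_+,q_-$ fresh copies); initial state $\Box$; final states $\{\Box\}$.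 The transition set is the smallest set containing: (i) for every $r=S\to[u](A_1,\dots,A_\ell)\in R$ with $S\in I$: $(\Box,\varepsilon,\text{all},\mathrm{push}_1(\Box),\langle r,1,0\rangle)$, $(\langle r,1,|u|\rangle,\varepsilon,\mathrm{equals}(\Box),\mathrm{set}(r),\Box_-)$, and $(\Box_-,\varepsilon,\text{all},\mathrm{down},\Box)$; (ii) for every $r=A\to[u_1,\dots,u_s](A_1,\dots,A_\ell)\in R$, $i\in[s]$, $j\in[|u_i|]$ such that the $j$-th symbol of $u_i$ is $\sigma\in\Sigma$: $(\langle r,i,j-1\rangle,\sigma,\text{all},\mathrm{id},\langle r,i,j\rangle)$; (iii) for every $r=A\to[u_1,\dots,u_s](A_1,\dots,A_\ell)\in R$, $i\in[s]$, $j\in[|u_i|]$, $\kappa\in[\ell]$, $r'=A_\kappa\to[v_1,\dots,v_{s'}](B_1,\dots,B_{\ell'})\in R$, $m\in[s']$ such that the $j$-th symbol of $u_i$ is $x_\kappa^m$, writing $q=\langle r,i,j\rangle$: $(\langle r,i,j-1\rangle,\varepsilon,\text{all},\mathrm{push}_\kappa(q),\langle r',m,0\rangle)$, $(\langle r,i,j-1\rangle,\varepsilon,\text{all},\mathrm{up}_\kappa,q_+)$, $(q_+,\varepsilon,\mathrm{equals}(r'),\mathrm{set}(q),\langle r',m,0\rangle)$, $(\langle r',m,|v_m|\rangle,\varepsilon,\mathrm{equals}(q),\mathrm{set}(r'),q_-)$, and $(q_-,\varepsilon,\text{all},\mathrm{down},q)$. *)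

From Stdlib Require Import List Arith PeanoNat.
Import ListNotations.
Set Implicit Arguments.

(* A symbol of a component u_i: a terminal sigma, or a variable x_i^j
   (both indices 1-based, as in the paper). *)
Inductive csym (Sigma : Type) : Type :=
| T (a : Sigma)
| V (i j : nat).
Arguments V {Sigma} i j.

Definition compfun (Sigma : Type) := list (list (csym Sigma)).

Definition subst_sym (Sigma : Type) (ts : list (list (list Sigma)))
  (x : csym Sigma) : list Sigma :=
  match x with
  | T a => [a]
  | V i j => nth (j - 1) (nth (i - 1) ts []) []
  end.

Definition apply_comp (Sigma : Type) (f : compfun Sigma)
  (ts : list (list (list Sigma))) : list (list Sigma) :=
  map (fun u => flat_map (subst_sym ts) u) f.

Record rule (N Sigma : Type) := mkRule {
  lhs : N;
  fn  : compfun Sigma;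
  rhs : list N }.

Record pmcfg (N Sigma : Type) := mkPMCFG {
  sort    : N -> nat;
  initial : N -> Prop;
  rules   : list (rule N Sigma) }.

Definition pmcfg_wf (N Sigma : Type) (G : pmcfg N Sigma) : Prop :=
  (exists l : list N, forall A, In A l) /\
  (exists l : list Sigma, forall a, In a l) /\
  (forall A, 1 <= sort G A) /\
  (forall S, initial G S -> sort G S = 1) /\
  (forall r, In r (rules G) ->
     length (fn r) = sort G (lhs r) /\
     forall u, In u (fn r) -> forall i j, In (V i j) u ->
       exists Ai, 1 <= i /\ nth_error (rhs r) (i - 1) = Some Ai /\
                  1 <= j <= sort G Ai).

Inductive generates (N Sigma : Type) (G : pmcfg N Sigma) :
    N -> list (list Sigma) -> Prop :=
| gen_rule : forall (r : rule N Sigma) (ts : list (list (list Sigma))),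
    In r (rules G) ->
    length ts = length (rhs r) ->
    (forall k Ak tk, nth_error (rhs r) k = Some Ak -> nth_error ts k = Some tk ->
        generates G Ak tk) ->
    generates G (lhs r) (apply_comp (fn r) ts).

Definition lang_pmcfg (N Sigma : Type) (G : pmcfg N Sigma) (w : list Sigma) : Prop :=
  exists S, initial G S /\ generates G S [w].

Inductive stlabel (Gamma : Type) : Type :=
| At
| Lab (g : Gamma).
Arguments At {Gamma}.

(* Addresses are lists of positive-integer child indices, rho n = rho ++ [n]. *)
Definition address := list nat.

Record treestack (Gamma : Type) := mkTS {
  xi  : address -> option (stlabel Gamma);
  rho : address }.

Definition ts_init (Gamma : Type) : treestack Gamma :=
  mkTS (fun a => match a with [] => Some At | _ => None end) [].

Definition upd (Gamma : Type) (f : address -> option (stlabel Gamma))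
  (p : address) (l : stlabel Gamma) : address -> option (stlabel Gamma) :=
  fun a => if list_eq_dec Nat.eq_dec a p then Some l else f a.

Inductive tpred (Gamma : Type) : Type :=
| PAll
| PBottom
| PEquals (g : Gamma).
Arguments PAll {Gamma}.
Arguments PBottom {Gamma}.

Definition pred_holds (Gamma : Type) (p : tpred Gamma) (c : treestack Gamma) : Prop :=
  match p with
  | PAll => True
  | PBottom => rho c = []
  | PEquals g => xi c (rho c) = Some (Lab g)
  end.

Inductive instr (Gamma : Type) : Type :=
| IId
| IPush (n : nat) (g : Gamma)
| IUp (n : nat)
| IDown
| ISet (g : Gamma).
Arguments IId {Gamma}.
Arguments IUp {Gamma} n.
Arguments IDown {Gamma}.

Definition instr_apply (Gamma : Type) (f : instr Gamma) (c : treestack Gamma)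
  : option (treestack Gamma) :=
  match f with
  | IId => Some c
  | IPush n g =>
      match xi c (rho c ++ [n]) with
      | None => Some (mkTS (upd (xi c) (rho c ++ [n]) (Lab g)) (rho c ++ [n]))
      | Some _ => None
      end
  | IUp n =>
      match xi c (rho c ++ [n]) with
      | Some _ => Some (mkTS (xi c) (rho c ++ [n]))
      | None => None
      end
  | IDown =>
      match rho c with
      | [] => None
      | _ => Some (mkTS (xi c) (removelast (rho c)))
      end
  | ISet g =>
      match rho c with
      | [] => None
      | _ => Some (mkTS (upd (xi c) (rho c) (Lab g)) (rho c))
      end
  end.

Record tsa (Sigma Gamma Q : Type) := mkTSA {
  t_init  : Q;
  t_final : Q -> Prop;
  t_trans : Q -> option Sigma -> tpred Gamma -> instr Gamma -> Q -> Prop }.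

Definition consume (Sigma : Type) (om : option Sigma) (w' : list Sigma) : list Sigma :=
  match om with None => w' | Some a => a :: w' end.

Definition config (Sigma Gamma Q : Type) := (Q * treestack Gamma * list Sigma)%type.

Inductive step (Sigma Gamma Q : Type) (M : tsa Sigma Gamma Q) :
    config Sigma Gamma Q -> config Sigma Gamma Q -> Prop :=
| step_intro : forall q om p f q' c c' w',
    t_trans M q om p f q' ->
    pred_holds p c ->
    instr_apply f c = Some c' ->
    step M (q, c, consume om w') (q', c', w').

Inductive steps (Sigma Gamma Q : Type) (M : tsa Sigma Gamma Q) :
    config Sigma Gamma Q -> config Sigma Gamma Q -> Prop :=
| steps_refl : forall x, steps M x x
| steps_cons : forall x y z, step M x y -> steps M y z -> steps M x z.

Definition lang_tsa (Sigma Gamma Q : Type) (M : tsa Sigma Gamma Q) (w : list Sigma) : Prop :=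
  exists qf c, t_final M qf /\ steps M (t_init M, ts_init Gamma, w) (qf, c, []).

Section MG.
Variables (N Sigma : Type) (G : pmcfg N Sigma).

Inductive mg_gamma : Type :=
| GBox
| GRule (r : rule N Sigma)
| GBar (r : rule N Sigma) (i j : nat).

Inductive mg_qbase : Type :=
| QBox
| QBar (r : rule N Sigma) (i j : nat).

Inductive mg_state : Type :=
| Qn (q : mg_qbase)
| Qp (q : mg_qbase)
| Qm (q : mg_qbase).

Definition comp_sym (r : rule N Sigma) (i j : nat) (x : csym Sigma) : Prop :=
  exists ui, 1 <= i /\ nth_error (fn r) (i - 1) = Some ui /\
             1 <= j /\ nth_error ui (j - 1) = Some x.

Definition var_target (r : rule N Sigma) (kappa : nat) (r' : rule N Sigma)
  (m lm : nat) : Prop :=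
  1 <= kappa /\ nth_error (rhs r) (kappa - 1) = Some (lhs r') /\
  In r' (rules G) /\
  exists vm, 1 <= m /\ nth_error (fn r') (m - 1) = Some vm /\ length vm = lm.

Inductive mg_trans : mg_state -> option Sigma -> tpred mg_gamma ->
                     instr mg_gamma -> mg_state -> Prop :=
| mt_start : forall r u, In r (rules G) -> initial G (lhs r) -> fn r = [u] ->
    mg_trans (Qn QBox) None PAll (IPush 1 GBox) (Qn (QBar r 1 0))
| mt_finish : forall r u, In r (rules G) -> initial G (lhs r) -> fn r = [u] ->
    mg_trans (Qn (QBar r 1 (length u))) None (PEquals GBox) (ISet (GRule r)) (Qm QBox)
| mt_final_down : forall r u, In r (rules G) -> initial G (lhs r) -> fn r = [u] ->
    mg_trans (Qm QBox) None PAll IDown (Qn QBox)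
| mt_term : forall r i j a, In r (rules G) -> comp_sym r i j (T a) ->
    mg_trans (Qn (QBar r i (j - 1))) (Some a) PAll IId (Qn (QBar r i j))
| mt_push : forall r i j kappa m r' lm, In r (rules G) ->
    comp_sym r i j (V kappa m) -> var_target r kappa r' m lm ->
    mg_trans (Qn (QBar r i (j - 1))) None PAll (IPush kappa (GBar r i j))
             (Qn (QBar r' m 0))
| mt_up : forall r i j kappa m r' lm, In r (rules G) ->
    comp_sym r i j (V kappa m) -> var_target r kappa r' m lm ->
    mg_trans (Qn (QBar r i (j - 1))) None PAll (IUp kappa) (Qp (QBar r i j))
| mt_resume : forall r i j kappa m r' lm, In r (rules G) ->
    comp_sym r i j (V kappa m) -> var_target r kappa r' m lm ->
    mg_trans (Qp (QBar r i j)) None (PEquals (GRule r')) (ISet (GBar r i j))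
             (Qn (QBar r' m 0))
| mt_return : forall r i j kappa m r' lm, In r (rules G) ->
    comp_sym r i j (V kappa m) -> var_target r kappa r' m lm ->
    mg_trans (Qn (QBar r' m lm)) None (PEquals (GBar r i j)) (ISet (GRule r'))
             (Qm (QBar r i j))
| mt_ret_down : forall r i j kappa m r' lm, In r (rules G) ->
    comp_sym r i j (V kappa m) -> var_target r kappa r' m lm ->
    mg_trans (Qm (QBar r i j)) None PAll IDown (Qn (QBar r i j)).

Definition MG : tsa Sigma mg_gamma mg_state :=
  mkTSA (Qn QBox) (fun q => q = Qn QBox) mg_trans.

End MG.

(* A derivation tree of G is simulated by a depth-first traversal of M(G).
   To produce component i of a node, M(G) reads u_i; at a variable x_kappa^m
   it goes to child kappa of the current stack node, pushing it on the first
   visit and moving up to it (and checking its rule label) on later visits,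
   produces component m of that child recursively, and returns, relabelling
   the child by its rule.  The invariant making revisits possible is that
   every child already present in the tree stack carries, along its whole
   subtree, the rule labels of the corresponding subderivation; a call only
   changes the stack strictly below the current node. *)

From Stdlib Require Import List Lia Arith PeanoNat.
Import ListNotations.
Set Implicit Arguments.

Section DerivationTrees.
Variables (N Sigma : Type).

Inductive dtree : Type :=
| DNode (r : rule N Sigma) (ch : list dtree).

Definition droot (d : dtree) : rule N Sigma := match d with DNode r _ => r end.
Definition dch (d : dtree) : list dtree := match d with DNode _ ch => ch end.

Fixpoint yield (d : dtree) : list (list Sigma) :=
  match d with DNode r ch => apply_comp (fn r) (map yield ch) end.

(* The automatic induction principle of [dtree] has no hypothesis for the
   children in the nested list. *)
Fixpoint dtree_ind' (P : dtree -> Prop)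
  (H : forall r ch, (forall c, In c ch -> P c) -> P (DNode r ch)) (d : dtree) : P d :=
  match d with
  | DNode r ch => H r ch
      ((fix go (l : list dtree) : forall c, In c l -> P c :=
         match l with
         | [] => fun c Hc => False_ind _ Hc
         | c' :: l' => fun c Hin =>
             match Hin with
             | or_introl e => eq_ind c' P (dtree_ind' P H c') c e
             | or_intror Hin' => go l' c Hin'
             end
         end) ch)
  end.

Lemma yield_var (ch : list dtree) kap m r' chc vm :
  nth_error ch (kap - 1) = Some (DNode r' chc) -> nth_error (fn r') (m - 1) = Some vm ->
  subst_sym (map yield ch) (V kap m) = flat_map (subst_sym (map yield chc)) vm.
Proof.
  intros Hc Hv; simpl.
  rewrite (nth_error_nth _ _ [] (map_nth_error yield _ _ Hc)); simpl.
  exact (nth_error_nth _ _ [] (map_nth_error _ _ _ Hv)).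
Qed.

Variable G : pmcfg N Sigma.

Inductive valid : dtree -> Prop :=
| valid_node r ch : In r (rules G) -> length ch = length (rhs r) ->
    (forall k c, nth_error ch k = Some c ->
       nth_error (rhs r) k = Some (lhs (droot c)) /\ valid c) ->
    valid (DNode r ch).

Lemma valid_forest (As : list N) (ts : list (list (list Sigma))) :
  length ts = length As ->
  (forall k A t, nth_error As k = Some A -> nth_error ts k = Some t ->
     exists d, valid d /\ lhs (droot d) = A /\ yield d = t) ->
  exists ds, map yield ds = ts /\ length ds = length As /\
    forall k c, nth_error ds k = Some c -> nth_error As k = Some (lhs (droot c)) /\ valid c.
Proof.
  revert ts; induction As as [|A As IH]; intros [|t ts] Hlen Hts; try discriminate.
  - exists []; split; [|split]; [reflexivity..|intros [|k] d Hd; discriminate].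
  - destruct (Hts 0 A t eq_refl eq_refl) as [d [Hd [HA Hy]]].
    destruct (IH ts (eq_add_S _ _ Hlen) (fun k => Hts (S k))) as [ds [Hys [Hl Hds]]].
    exists (d :: ds); simpl; rewrite Hys, Hy, Hl; split; [|split]; [reflexivity..|].
    intros [|k] c Hc; simpl in Hc |- *; [injection Hc as <-; rewrite HA; auto | auto].
Qed.

Lemma generates_valid_dtree A t : generates G A t ->
  exists d, valid d /\ lhs (droot d) = A /\ yield d = t.
Proof.
  induction 1 as [r ts Hr Hlen _ IH].
  destruct (valid_forest (rhs r) ts Hlen IH) as [ds [Hys [Hl Hds]]].
  exists (DNode r ds); simpl; rewrite Hys; split; [constructor|]; auto.
Qed.

End DerivationTrees.

Arguments DNode {N Sigma}.

Section TreeStacks.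
Variable Gamma : Type.
Implicit Types (x : address -> option (stlabel Gamma)) (p a : address).

Lemma upd_same x p l : upd x p l p = Some l.
Proof. unfold upd; destruct (list_eq_dec Nat.eq_dec p p); congruence. Qed.

Lemma upd_other x p l a : a <> p -> upd x p l a = x a.
Proof. unfold upd; destruct (list_eq_dec Nat.eq_dec a p); congruence. Qed.

Definition prefix_closed x : Prop := forall a n, x (a ++ [n]) <> None -> x a <> None.

Lemma prefix_closed_upd x p l : prefix_closed x ->
  (forall a n, a ++ [n] = p -> x a <> None) -> prefix_closed (upd x p l).
Proof.
  intros Hx Hp a n Ha.
  destruct (list_eq_dec Nat.eq_dec a p) as [->|Hap]; [rewrite upd_same; discriminate|].
  rewrite upd_other by exact Hap.
  destruct (list_eq_dec Nat.eq_dec (a ++ [n]) p) as [E|E]; [exact (Hp a n E)|].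
  rewrite upd_other in Ha by exact E; exact (Hx a n Ha).
Qed.

Definition strict_desc p a : Prop := exists n y, a = p ++ n :: y.

Definition frame p x x' : Prop := forall a, ~ strict_desc p a -> x' a = x a.

Lemma not_strict_desc_self p : ~ strict_desc p p.
Proof.
  intros [n [y E]]; apply (f_equal (@length nat)) in E.
  rewrite length_app in E; simpl in E; lia.
Qed.

Lemma strict_desc_child {p n a} : strict_desc (p ++ [n]) a -> strict_desc p a.
Proof. intros [n' [y ->]]; exists n, (n' :: y); rewrite <- app_assoc; reflexivity. Qed.

Lemma upd_below x p l n y : upd x p l (p ++ n :: y) = x (p ++ n :: y).
Proof.
  apply upd_other; intros E.
  exact (not_strict_desc_self (ex_intro _ n (ex_intro _ y (eq_sym E)))).
Qed.

Lemma frame_self p x x' : frame p x x' -> x' p = x p.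
Proof. intros H; apply H, not_strict_desc_self. Qed.

Lemma frame_refl p x : frame p x x.
Proof. intros a _; reflexivity. Qed.

Lemma frame_trans p x1 x2 x3 : frame p x1 x2 -> frame p x2 x3 -> frame p x1 x3.
Proof. intros H12 H23 a Ha; rewrite H23, H12; auto. Qed.

Lemma frame_child p n x x' l l' :
  frame (p ++ [n]) (upd x (p ++ [n]) l) x' -> frame p x (upd x' (p ++ [n]) l').
Proof.
  intros Hx' a Ha.
  assert (Hne : a <> p ++ [n]) by (intros ->; apply Ha; exists n, []; reflexivity).
  rewrite upd_other by exact Hne.
  rewrite Hx'; [apply upd_other, Hne|].
  intros Hd; exact (Ha (strict_desc_child Hd)).
Qed.

Lemma frame_sibling p n n' x x' l y : n <> n' ->
  frame (p ++ [n']) (upd x (p ++ [n']) l) x' -> x' ((p ++ [n]) ++ y) = x ((p ++ [n]) ++ y).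
Proof.
  intros Hn Hx'; rewrite <- app_assoc; simpl.
  rewrite Hx', upd_other; [reflexivity| |].
  - intros E; apply app_inv_head in E; injection E; auto.
  - intros [m [z E]]; rewrite <- app_assoc in E; apply app_inv_head in E.
    injection E; auto.
Qed.

Lemma iset_apply x p g : p <> [] ->
  instr_apply (ISet g) (mkTS x p) = Some (mkTS (upd x p (Lab g)) p).
Proof. destruct p; [congruence|reflexivity]. Qed.

Lemma idown_apply x p n : instr_apply IDown (mkTS x (p ++ [n])) = Some (mkTS x p).
Proof.
  simpl; destruct (p ++ [n]) eqn:E.
  - destruct p; discriminate.
  - rewrite <- E, removelast_last; reflexivity.
Qed.

End TreeStacks.

Section Runs.
Variables (Sigma Gamma Q : Type) (M : tsa Sigma Gamma Q).

Lemma steps_trans c1 c2 c3 : steps M c1 c2 -> steps M c2 c3 -> steps M c1 c3.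
Proof. induction 1; eauto using steps. Qed.

Lemma step_silent q p f q' c c' w :
  t_trans M q None p f q' -> pred_holds p c -> instr_apply f c = Some c' ->
  step M (q, c, w) (q', c', w).
Proof. exact (fun Ht Hp Hf => step_intro M q None p f q' c w Ht Hp Hf). Qed.

Lemma step_read q a p f q' c c' w :
  t_trans M q (Some a) p f q' -> pred_holds p c -> instr_apply f c = Some c' ->
  step M (q, c, a :: w) (q', c', w).
Proof. exact (fun Ht Hp Hf => step_intro M q (Some a) p f q' c w Ht Hp Hf). Qed.

End Runs.

Lemma skipn_nth_error A (u : list A) j x s :
  skipn j u = x :: s -> nth_error u j = Some x /\ skipn (S j) u = s.
Proof.
  revert j; induction u as [|a u IH]; intros [|j] H; simpl in *; try discriminate.
  - injection H as -> ->; auto.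
  - exact (IH j H).
Qed.

Section Simulation.
Variables (N Sigma : Type) (G : pmcfg N Sigma).

Hypothesis rules_wf : forall r, In r (rules G) ->
  length (fn r) = sort G (lhs r) /\
  forall u, In u (fn r) -> forall i j, In (V i j) u ->
    exists Ai, 1 <= i /\ nth_error (rhs r) (i - 1) = Some Ai /\ 1 <= j <= sort G Ai.

Local Notation stack := (address -> option (stlabel (mg_gamma N Sigma))).
Local Notation qbar r i j := (Qn (QBar r i j)).
Local Notation yields ch := (map (@yield N Sigma) ch).

(* The child with 0-based index [k] in [ch] lives at the 1-based address [p ++ [S k]]. *)
Inductive enc (x : stack) : address -> dtree N Sigma -> Prop :=
| enc_node p r ch : x p = Some (Lab (GRule r)) ->
    (forall k c, nth_error ch k = Some c -> x (p ++ [S k]) <> None ->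
       enc x (p ++ [S k]) c) ->
    enc x p (DNode r ch).

Definition enc_children (x : stack) (p : address) (d : dtree N Sigma) : Prop :=
  forall k c, nth_error (dch d) k = Some c -> x (p ++ [S k]) <> None ->
    enc x (p ++ [S k]) c.

Lemma enc_ext (x x' : stack) p d :
  enc x p d -> (forall y, x' (p ++ y) = x (p ++ y)) -> enc x' p d.
Proof.
  intros H; revert x'; induction H as [p r ch Hp Hch IH]; intros x' E.
  constructor.
  - rewrite <- (app_nil_r p), E, app_nil_r; exact Hp.
  - intros k c Hk Hn; apply IH; auto.
    + rewrite <- E; exact Hn.
    + intros y; rewrite <- app_assoc; apply E.
Qed.

Lemma enc_children_ext (x x' : stack) p d : enc_children x p d ->
  (forall n y, x' (p ++ n :: y) = x (p ++ n :: y)) -> enc_children x' p d.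
Proof.
  intros H E k c Hk Hn; apply enc_ext with x.
  - apply H; [exact Hk|]; rewrite <- E; exact Hn.
  - intros y; rewrite <- app_assoc; apply E.
Qed.

Lemma call_data r ch i u j kap m :
  valid G (DNode r ch) -> 1 <= i -> nth_error (fn r) (i - 1) = Some u ->
  nth_error u j = Some (V kap m) ->
  exists r' chc vm, nth_error ch (kap - 1) = Some (DNode r' chc) /\
    valid G (DNode r' chc) /\ nth_error (fn r') (m - 1) = Some vm /\
    comp_sym r i (S j) (V kap m) /\ var_target G r kap r' m (length vm).
Proof.
  intros Hv Hi Hu Hj; inversion Hv as [r0 ch0 Hr Hlen Hch]; subst r0 ch0.
  destruct (proj2 (rules_wf _ Hr) u (nth_error_In _ _ Hu) kap m (nth_error_In _ _ Hj))
    as [A [Hkap [HA Hm]]].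
  destruct (nth_error ch (kap - 1)) as [[r' chc]|] eqn:Hc.
  2: { apply nth_error_None in Hc; rewrite Hlen in Hc.
       apply nth_error_None in Hc; congruence. }
  destruct (Hch _ _ Hc) as [HA' Hvc]; simpl in HA'.
  rewrite HA in HA'; injection HA' as ->.
  inversion Hvc as [r0 ch0 Hr' _ _]; subst r0 ch0.
  destruct (nth_error (fn r') (m - 1)) as [vm|] eqn:Hvm.
  2: { apply nth_error_None in Hvm; rewrite (proj1 (rules_wf _ Hr')) in Hvm; lia. }
  exists r', chc, vm; split; [|split; [|split; [|split]]]; auto.
  - exists u; rewrite Nat.sub_succ, Nat.sub_0_r; repeat split; auto; lia.
  - split; [lia|split; [exact HA|split; [exact Hr'|]]].
    exists vm; repeat split; auto; lia.
Qed.

Section Call.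
Variables (r r' : rule N Sigma) (i j kap m lm : nat).
Hypotheses (Hr : In r (rules G)) (Hsym : comp_sym r i (S j) (V kap m))
           (Htarget : var_target G r kap r' m lm).

Lemma enter_child (x : stack) rho ch chc w :
  nth_error ch (kap - 1) = Some (DNode r' chc) ->
  prefix_closed x -> enc_children x rho (DNode r ch) ->
  steps (MG G) (qbar r i j, mkTS x rho, w)
    (qbar r' m 0, mkTS (upd x (rho ++ [kap]) (Lab (GBar r i (S j)))) (rho ++ [kap]), w) /\
  enc_children (upd x (rho ++ [kap]) (Lab (GBar r i (S j)))) (rho ++ [kap]) (DNode r' chc).
Proof.
  intros Hc Hx Henc.
  assert (Hkap : S (kap - 1) = kap) by (destruct Htarget; lia).
  pose proof (mt_up Hr Hsym Htarget) as Hup; pose proof (mt_push Hr Hsym Htarget) as Hpush.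
  rewrite Nat.sub_succ, Nat.sub_0_r in Hup, Hpush.
  destruct (x (rho ++ [kap])) as [l|] eqn:Ex.
  - (* the child was visited before, so it is labelled by the rule [r'] *)
    assert (Hchild : enc x (rho ++ [kap]) (DNode r' chc)).
    { rewrite <- Hkap; apply (Henc _ _ Hc); rewrite Hkap, Ex; discriminate. }
    inversion Hchild as [p0 r0 ch0 Hlab Hgrand]; subst p0 r0 ch0.
    split.
    + eapply steps_cons.
      { apply step_silent with (p := PAll) (f := IUp kap) (c' := mkTS x (rho ++ [kap]));
          [exact Hup|exact I|simpl; rewrite Ex; reflexivity]. }
      eapply steps_cons; [|constructor].
      eapply step_silent; [exact (mt_resume Hr Hsym Htarget)|exact Hlab|].
      apply iset_apply; destruct rho; discriminate.
    + apply enc_children_ext with x; [exact Hgrand|intros n y; apply upd_below].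
  - split.
    + eapply steps_cons; [|constructor].
      eapply step_silent; [exact Hpush|exact I|simpl; rewrite Ex; reflexivity].
    + intros k c _ Hn; exfalso; rewrite upd_below in Hn; exact (Hx _ _ Hn Ex).
Qed.
Lemma return_to_parent (x : stack) rho w :
  x (rho ++ [kap]) = Some (Lab (GBar r i (S j))) ->
  steps (MG G) (qbar r' m lm, mkTS x (rho ++ [kap]), w)
    (qbar r i (S j), mkTS (upd x (rho ++ [kap]) (Lab (GRule r'))) rho, w).
Proof.
  intros Hx.
  eapply steps_cons.
  { eapply step_silent; [exact (mt_return Hr Hsym Htarget)|exact Hx|].
    apply iset_apply; destruct rho; discriminate. }
  eapply steps_cons; [|constructor].
  eapply step_silent; [exact (mt_ret_down Hr Hsym Htarget)|exact I|apply idown_apply].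
Qed.

End Call.

Lemma enc_children_after_call (x x' : stack) rho r ch kap r' chc l :
  1 <= kap -> nth_error ch (kap - 1) = Some (DNode r' chc) ->
  enc_children x rho (DNode r ch) -> enc_children x' (rho ++ [kap]) (DNode r' chc) ->
  frame (rho ++ [kap]) (upd x (rho ++ [kap]) l) x' ->
  enc_children (upd x' (rho ++ [kap]) (Lab (GRule r'))) rho (DNode r ch).
Proof.
  intros Hkap Hc Henc Henc' Hfr k c Hk Hn; simpl in Hk.
  destruct (Nat.eq_dec (S k) kap) as [<-|Hne].
  - rewrite Nat.sub_succ, Nat.sub_0_r, Hk in Hc; injection Hc as ->.
    constructor; [apply upd_same|].
    intros k' c' Hk' Hn'; apply enc_ext with x'.
    + apply Henc'; [exact Hk'|]; rewrite upd_below in Hn'; exact Hn'.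
    + intros y; rewrite <- app_assoc; apply upd_below.
  - assert (Hsib : forall y, upd x' (rho ++ [kap]) (Lab (GRule r')) ((rho ++ [S k]) ++ y)
                             = x ((rho ++ [S k]) ++ y)).
    { intros y; rewrite upd_other; [exact (frame_sibling _ _ Hne Hfr)|].
      intros E; rewrite <- app_assoc in E; apply app_inv_head in E.
      injection E; auto. }
    apply enc_ext with x; [|exact Hsib].
    apply Henc; [exact Hk|].
    rewrite <- (app_nil_r (rho ++ [S k])), <- Hsib, app_nil_r; exact Hn.
Qed.

Definition runs_component (d : dtree N Sigma) : Prop :=
  forall i u, 1 <= i -> nth_error (fn (droot d)) (i - 1) = Some u ->
  forall (x : stack) rho w, x rho <> None -> prefix_closed x -> enc_children x rho d ->
  exists x', steps (MG G)
      (qbar (droot d) i 0, mkTS x rho, flat_map (subst_sym (yields (dch d))) u ++ w)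
      (qbar (droot d) i (length u), mkTS x' rho, w)
    /\ prefix_closed x' /\ enc_children x' rho d /\ frame rho x x'.

Section Component.
Variables (r : rule N Sigma) (ch : list (dtree N Sigma)) (i : nat) (u : list (csym Sigma)).
Hypotheses (Hv : valid G (DNode r ch))
           (IH : forall c, In c ch -> valid G c -> runs_component c)
           (Hi : 1 <= i) (Hu : nth_error (fn r) (i - 1) = Some u).

Lemma run_call j kap m (x : stack) rho w :
  nth_error u j = Some (V kap m) ->
  x rho <> None -> prefix_closed x -> enc_children x rho (DNode r ch) ->
  exists x', steps (MG G)
      (qbar r i j, mkTS x rho, subst_sym (yields ch) (V kap m) ++ w)
      (qbar r i (S j), mkTS x' rho, w)
    /\ prefix_closed x' /\ enc_children x' rho (DNode r ch) /\ frame rho x x'.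
Proof.
  intros Hj Hx Hcl Henc.
  destruct (call_data _ Hv Hi Hu Hj) as [r' [chc [vm [Hc [Hvc [Hvm [Hsym Htarget]]]]]]].
  assert (Hr : In r (rules G)) by (inversion Hv; assumption).
  assert (Hkap : 1 <= kap) by (destruct Htarget; lia).
  assert (Hm : 1 <= m) by (destruct Htarget as [_ [_ [_ [vm' [Hm _]]]]]; exact Hm).
  rewrite (yield_var _ _ _ Hc Hvm).
  set (w' := flat_map _ vm ++ w).
  set (x1 := upd x (rho ++ [kap]) (Lab (GBar r i (S j)))).
  destruct (enter_child Hr Hsym Htarget w' Hc Hcl Henc) as [Hst1 Henc1].
  assert (Hcl1 : prefix_closed x1).
  { apply prefix_closed_upd; [exact Hcl|].
    intros a n E; apply app_inj_tail in E as [-> _]; exact Hx. }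
  assert (Hx1 : x1 (rho ++ [kap]) <> None) by (unfold x1; rewrite upd_same; discriminate).
  assert (Hrun : runs_component (DNode r' chc)) by exact (IH (nth_error_In _ _ Hc) Hvc).
  destruct (Hrun m vm Hm Hvm x1 (rho ++ [kap]) w Hx1 Hcl1 Henc1)
    as [x2 [Hst2 [Hcl2 [Henc2 Hfr2]]]].
  assert (Hx2 : x2 (rho ++ [kap]) = Some (Lab (GBar r i (S j)))).
  { rewrite (frame_self Hfr2); apply upd_same. }
  exists (upd x2 (rho ++ [kap]) (Lab (GRule r'))); split; [|split; [|split]].
  - eapply steps_trans; [exact Hst1|].
    eapply steps_trans; [exact Hst2|].
    exact (return_to_parent Hr Hsym Htarget _ _ _ Hx2).
  - apply prefix_closed_upd; [exact Hcl2|].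
    intros a n E; apply app_inj_tail in E as [-> ->].
    apply (Hcl2 _ kap); rewrite Hx2; discriminate.
  - exact (enc_children_after_call Hkap Hc Henc Henc2 Hfr2).
  - exact (frame_child _ _ Hfr2).
Qed.

Lemma run_suffix s j (x : stack) rho w :
  j + length s = length u -> skipn j u = s ->
  x rho <> None -> prefix_closed x -> enc_children x rho (DNode r ch) ->
  exists x', steps (MG G)
      (qbar r i j, mkTS x rho, flat_map (subst_sym (yields ch)) s ++ w)
      (qbar r i (length u), mkTS x' rho, w)
    /\ prefix_closed x' /\ enc_children x' rho (DNode r ch) /\ frame rho x x'.
Proof.
  revert j x; induction s as [|sy s IHs]; intros j x Hlen Hs Hx Hcl Henc; simpl in Hlen.
  - rewrite Nat.add_0_r in Hlen; subst j.
    exists x; split; [constructor|split; [exact Hcl|split; [exact Henc|apply frame_refl]]].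
  - destruct (skipn_nth_error _ _ Hs) as [Hj Hs'].
    assert (Hr : In r (rules G)) by (inversion Hv; assumption).
    destruct sy as [a|kap m]; cbn [flat_map].
    + destruct (IHs (S j) x ltac:(lia) Hs' Hx Hcl Henc) as [x' [Hst Hinv]].
      exists x'; split; [|exact Hinv].
      eapply steps_cons; [|exact Hst].
      assert (Hsym : comp_sym r i (S j) (T a)).
      { exists u; rewrite Nat.sub_succ, Nat.sub_0_r; repeat split; auto; lia. }
      pose proof (mt_term G Hr Hsym) as Ht; rewrite Nat.sub_succ, Nat.sub_0_r in Ht.
      eapply step_read; [exact Ht|exact I|reflexivity].
    + rewrite <- app_assoc.
      destruct (run_call j (flat_map (subst_sym (yields ch)) s ++ w) Hj Hx Hcl Henc)
        as [x1 [Hst1 [Hcl1 [Henc1 Hfr1]]]].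
      assert (Hx1 : x1 rho <> None) by (rewrite (frame_self Hfr1); exact Hx).
      destruct (IHs (S j) x1 ltac:(lia) Hs' Hx1 Hcl1 Henc1)
        as [x2 [Hst2 [Hcl2 [Henc2 Hfr2]]]].
      exists x2; split; [|split; [|split]]; auto.
      * eapply steps_trans; [exact Hst1|exact Hst2].
      * exact (frame_trans Hfr1 Hfr2).
Qed.

End Component.

Lemma runs_component_valid d : valid G d -> runs_component d.
Proof.
  induction d as [r ch IH] using dtree_ind'; intros Hv i u Hi Hu x rho w.
  exact (run_suffix Hv IH Hi Hu 0 w eq_refl eq_refl).
Qed.

Lemma accept_start_rule r ch u :
  valid G (DNode r ch) -> initial G (lhs r) -> fn r = [u] ->
  lang_tsa (MG G) (flat_map (subst_sym (yields ch)) u).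
Proof.
  intros Hv Hinit Hfn.
  assert (Hr : In r (rules G)) by (inversion Hv; assumption).
  set (x1 := upd (xi (ts_init (mg_gamma N Sigma))) [1] (Lab (GBox N Sigma))).
  assert (Hcl1 : prefix_closed x1).
  { apply prefix_closed_upd.
    - intros a n Hn; exfalso; apply Hn; destruct a; reflexivity.
    - intros [|b a] n E; [discriminate|destruct a; discriminate]. }
  assert (Hx1 : x1 [1] <> None) by (unfold x1; rewrite upd_same; discriminate).
  assert (Henc1 : enc_children x1 [1] (DNode r ch)).
  { intros k c _ Hn; exfalso; apply Hn; unfold x1.
    rewrite upd_other; [reflexivity|discriminate]. }
  assert (Hu : nth_error (fn r) (1 - 1) = Some u) by (rewrite Hfn; reflexivity).
  destruct (runs_component_valid Hv (le_n 1) Hu [] Hx1 Hcl1 Henc1)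
    as [x2 [Hst [_ [_ Hfr]]]].
  rewrite app_nil_r in Hst.
  exists (Qn (QBox N Sigma)), (mkTS (upd x2 [1] (Lab (GRule r))) []); split; [reflexivity|].
  eapply steps_cons.
  { eapply step_silent with (c' := mkTS x1 [1]);
      [exact (mt_start G r Hr Hinit Hfn)|exact I|reflexivity]. }
  eapply steps_trans; [exact Hst|].
  eapply steps_cons.
  { eapply step_silent; [exact (mt_finish G r Hr Hinit Hfn)| |apply iset_apply; discriminate].
    simpl; rewrite (frame_self Hfr); apply upd_same. }
  eapply steps_cons; [|constructor].
  eapply step_silent; [exact (mt_final_down G r Hr Hinit Hfn)|exact I|exact (idown_apply _ [] 1)].
Qed.

End Simulation.

Theorem mainTheorem5 (N Sigma : Type) (G : pmcfg N Sigma) :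
  pmcfg_wf G ->
  forall w : list Sigma, lang_pmcfg G w -> lang_tsa (MG G) w.
Proof.
  intros [_ [_ [_ [_ Hrules]]]] w [S [HS Hgen]].
  destruct (generates_valid_dtree Hgen) as [[r ch] [Hv [Hlhs Hy]]]; simpl in Hlhs, Hy.
  subst S; unfold apply_comp in Hy.
  destruct (fn r) as [|u [|]] eqn:Hfn; try discriminate.
  injection Hy as <-.
  exact (accept_start_rule Hrules Hv HS Hfn).
Qed.
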